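(* Let $p$ be a prime and let $G$ be a non-abelian finite $p$-group of order $p^n$, with $d=d(G)$, $\delta=d(G/Z(G))$, $k'=d(\gamma_2G/\gamma_3G)$ and $|\gamma_2G|=p^k$. Let $r,t$ be non-negative integers with $\binom{\delta}{2}-k'=\binom{r}{2}+t$ and $0\le t<r$. Then \[\tfrac{1}{2}(d-1)(n+k)-k(d-\delta)-\binom{\delta}{3}+\binom{r}{3}+\binom{t}{2}\;\le\;\tfrac{1}{2}(d-1)(n+k)-\sum_{i=2}^{\min(d,k'+1)}(d-i).\]
   Context: $d(\cdot)$ denotes the minimal number of generators, $Z(G)$ the center, $\gamma_iG$ the lower central series. Binomial coefficients satisfy $\binom{a}{b}=0$ when $0\le a<b$; an empty sum is $0$. (The right-hand side is the exponent in a known bound $|M(G)|\le p^{\frac12(d-1)(n+k)-\sum_{i=2}^{\min(d,k'+1)}(d-i)}$ for the Schur multiplier; the left-hand side is the exponent of the bound $|M(G)|\le p^{\frac{1}{2}(d-1)(n+k)-k(d-\delta)-\binom{\delta}{3}+\binom{r}{3}+\binom{t}{2}}$.) *)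

From mathcomp Require Import all_boot all_order all_algebra all_fingroup all_solvable.
Set Implicit Arguments. Unset Strict Implicit. Unset Printing Implicit Defensive.

(* d(G): the minimal number of generators of G, i.e. the least #|X| with
   <<X>> = G.  The minimum is over a nonempty family since <<G>> = G. *)
Definition ngen (gT : finGroupType) (G : {set gT}) : nat :=
  \big[minn/#|G|]_(X : {set gT} | (<<X>>%g == G)) #|X|.

From mathcomp Require Import all_boot all_order all_algebra all_fingroup all_solvable.
From mathcomp Require Import zify lra.
Set Implicit Arguments. Unset Strict Implicit. Unset Printing Implicit Defensive.

(* Since G/Z(G) is a quotient of G, delta <= d; since gamma_2/gamma_3 is central
   in G/gamma_3, it is an abelian p-group of order at most p^k, so k' <= k.
   With m = min(d, k'+1), each term d - i splits as (d - delta) + (delta - i) and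
   there are at most k' <= k terms, so the claim reduces to
     sum_{i=2}^{k'+1} (delta - i) + C(r,3) + C(t,2) <= C(delta,3).
   The sum is C(delta-1,2) - C(delta-1-k',2), so with e = delta - 1 this reads
   C(r,3) + C(t,2) <= C(e,3) + C(e-k',2).  For r < e it follows from
   C(r,3) + C(t,2) <= C(r+1,3); for r = e the hypothesis gives k' = r - t and
   equality holds; r > e forces t = k' = 0 and r = delta. *)

Lemma geq_bigmin_cond (I : finType) (P : pred I) (F : I -> nat) x0 i0 :
  P i0 -> \big[minn/x0]_(i | P i) F i <= F i0.
Proof.
move=> Pi0; have : i0 \in index_enum I := mem_index_enum i0.
elim: (index_enum I) => //= j s IH; rewrite in_cons big_cons.
case/predU1P=> [<- | /IH le_s]; first by rewrite Pi0 geq_minl.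
by case: (P j) => //; apply: leq_trans (geq_minr _ _) le_s.
Qed.

Lemma leq_sum_nat_prefix m n1 n2 (F : nat -> nat) :
  n1 <= n2 -> \sum_(m <= i < n1) F i <= \sum_(m <= i < n2) F i.
Proof.
move=> le_n12; have [le_mn1 | lt_n1m] := leqP m n1; last by rewrite big_geq // ltnW.
by rewrite [X in _ <= X](big_cat_nat le_mn1 le_n12) leq_addr.
Qed.

Lemma sum_subn_bin2 n N :
  1 < N -> \sum_(2 <= i < N) (n - i) + 'C(n.+1 - N, 2) = 'C(n.-1, 2).
Proof.
elim: N => // N IH; rewrite ltnS leq_eqVlt => /predU1P[<- | lt1N].
  by rewrite big_geq // add0n subSS subn1.
rewrite big_nat_recr //= -addnA -{}IH // subSS; congr (_ + _).
have [le_Nn | lt_nN] := leqP N n; first by rewrite subSn // binS bin1 addnC.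
have n_N0 : n - N = 0 by lia.
have n1_N0 : n.+1 - N = 0 by lia.
by rewrite n_N0 n1_N0.
Qed.

Lemma leq_sum_subn_bin3 n r t k :
  'C(n, 2) = 'C(r, 2) + t + k -> t < r ->
  \sum_(2 <= i < k.+2) (n - i) + 'C(r, 3) + 'C(t, 2) <= 'C(n, 3).
Proof.
move=> E lt_tr; have := @sum_subn_bin2 n k.+2 isT; rewrite subSS.
case: n E => [|e] E S.
  have [r2 -> ->] : [/\ 'C(r, 2) = 0, t = 0 & k = 0].
    by move: E; rewrite bin0n /= => E; split; lia.
  by have := mul_bin_left r 2; rewrite r2 muln0 big_geq // !bin0n /=; lia.
rewrite subSS /= in S; rewrite binS; move: E; rewrite binS bin1 => E.
have le_tr2 : 'C(t, 2) <= 'C(r, 2) by apply: leq_bin2l; apply: ltnW.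
have [lt_re | lt_er | eq_re] := ltngtP r e.
- by have := leq_bin2l 3 lt_re; rewrite binS; lia.
- have := leq_bin2l 2 lt_er; rewrite binS bin1 => le_Cr.
  have [t0 k0] : t = 0 /\ k = 0 by lia.
  have /eqP re : r == e.+1.
    rewrite eqn_leq lt_er andbT leqNgt; apply/negP => /(leq_bin2l 2).
    by rewrite binS bin1 binS bin1; lia.
  by rewrite re binS k0 t0 big_geq // bin0n /= add0n addn0.
- rewrite eq_re in E *; have e_k : e - k = t by lia.
  by rewrite e_k in S; lia.
Qed.

Lemma sum_subn_split d n m k' k :
  m <= k'.+1 -> k' <= k ->
  \sum_(2 <= i < m.+1) (d - i) <= k * (d - n) + \sum_(2 <= i < k'.+2) (n - i).
Proof.
move=> le_mk' le_k'k.
apply: (@leq_trans (\sum_(2 <= i < m.+1) ((d - n) + (n - i)))).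
  by apply: leq_sum => i _; lia.
rewrite big_split /= sum_nat_const_nat leq_add ?leq_sum_nat_prefix //.
by rewrite leq_mul2r; apply/orP; right; lia.
Qed.

Section MinimalGenerators.
Local Open Scope group_scope.

Lemma ngen_grank (gT : finGroupType) (G : {group gT}) : ngen G = 'm(G).
Proof.
apply/eqP; rewrite eqn_leq; apply/andP; split.
  by have [B genB <-] := grank_witness G; apply: geq_bigmin_cond; rewrite genB.
apply: (big_ind (fun v => 'm(G) <= v)) => [|u v mu mv|X /eqP genX].
- by rewrite -{1}(genGid G) grank_min.
- by rewrite leq_min mu mv.
- by rewrite -genX grank_min.
Qed.

Lemma grank_abelian_pgroup (gT : finGroupType) (p : nat) (A : {group gT}) :
  p.-group A -> abelian A -> 'm(A) <= logn p #|A|.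
Proof. by move=> pA cA; rewrite grank_abelian // (rank_pgroup pA) p_rank_le_logn. Qed.

Lemma grank_lcn_factor (gT : finGroupType) (p n : nat) (G : {group gT}) :
  p.-group G -> 'm('L_n(G) / 'L_n.+1(G)) <= logn p #|'L_n(G)|.
Proof.
move=> pG; apply: leq_trans (logn_quotient p 'L_n(G) 'L_n.+1(G)).
apply: grank_abelian_pgroup.
  exact/quotient_pgroup/(pgroupS (lcn_sub n G) pG).
exact: abelianS (lcn_central n G) (center_abelian _).
Qed.

End MinimalGenerators.

Import GRing.Theory Num.Theory.
Local Open Scope ring_scope.

Theorem lemma3p6 (gT : finGroupType) (G : {group gT}) (p n k r t : nat) :
  prime p -> pgroup p G -> ~~ abelian G ->
  #|G| = (p ^ n)%N ->
  #|('L_2(G))%g| = (p ^ k)%N ->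
  let d := ngen G in
  let delta := ngen (G / 'Z(G))%g in
  let k' := ngen ('L_2(G) / 'L_3(G))%g in
  'C(delta, 2) = ('C(r, 2) + t + k')%N ->
  (t < r)%N ->
  (1 / 2 : rat) * (d%:R - 1) * (n%:R + k%:R) - k%:R * (d%:R - delta%:R)
    - ('C(delta, 3))%:R + ('C(r, 3))%:R + ('C(t, 2))%:R
  <= (1 / 2 : rat) * (d%:R - 1) * (n%:R + k%:R)
    - \sum_(2 <= i < (minn d k'.+1).+1) (d%:R - i%:R).
Proof.
move=> pr_p pG _ _ oL d delta k' E lt_tr.
have le_delta_d : (delta <= d)%N.
  by rewrite /delta /d !ngen_grank quotient_grank ?normal_norm ?center_normal.
have le_k'k : (k' <= k)%N.
  by rewrite /k' ngen_grank; have := grank_lcn_factor 2 pG; rewrite oL pfactorK.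
clearbody d delta k'.
move: (minn d k'.+1) (geq_minl d k'.+1) (geq_minr d k'.+1) => m le_md le_mk'.
have key : (\sum_(2 <= i < m.+1) (d - i) + 'C(r, 3) + 'C(t, 2)
            <= k * (d - delta) + 'C(delta, 3))%N.
  have := sum_subn_split d delta le_mk' le_k'k.
  have := leq_sum_subn_bin3 E lt_tr; lia.
have -> : \sum_(2 <= i < m.+1) (d%:R - i%:R)
          = (\sum_(2 <= i < m.+1) (d - i))%N%:R :> rat.
  rewrite natr_sum; apply: eq_big_nat => i /andP[_ le_im].
  by rewrite natrB // (leq_trans _ le_md).
rewrite -(ler_nat rat) !natrD natrM natrB // in key; lra.
Qed.
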